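(* Let $w$ be a string of length $n$ and $i$ a position of $w$ with $i-\mu(i)\ge1$, $i+\mu(i)-1\le n$ and $\mu(i)>1$. Then for every integer $j$ with $i<j<i+\mu(i)$ such that $j-\mu(j)<i$ and $\mu(j)\ne\mu(i)$, we have either $\mu(j)<\frac12\mu(i)$ or $\mu(j)\ge 2\mu(i)$.
   Context: For a position $i\in\{1,\dots,n\}$ of $w$, the local period $\mu(i)$ is the least positive integer $\mu$ such that $w[j]=w[j+\mu]$ for all $j$ with $\max\{1,i-\mu\}\le j$ and $j+\mu\le\min\{n,i+\mu-1\}$. *)

From mathcomp Require Import all_boot.
Set Implicit Arguments. Unset Strict Implicit. Unset Printing Implicit Defensive.

(* Strings are [seq T] over an eqType alphabet; positions are 1-indexed.
   [letter w k] is w[k] (as an option; positions 1..size w give Some _). *)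
Definition letter (T : eqType) (w : seq T) (k : nat) : option T :=
  nth None (map Some w) k.-1.

Definition lp_ok (T : eqType) (w : seq T) (i mu : nat) : bool :=
  (0 < mu) &&
  all (fun j => letter w j == letter w (j + mu))
      [seq j <- iota 0 (size w).+1 |
        (maxn 1 (i - mu) <= j) && (j + mu <= minn (size w) (i + mu - 1))].

Lemma lp_ok_exists (T : eqType) (w : seq T) (i : nat) :
  exists mu, lp_ok w i mu.
Proof.
exists (size w).+1; rewrite /lp_ok; apply/andP; split=> //.
apply/allP => j; rewrite mem_filter => /andP [/andP [H1 H2] _].
exfalso; move: H1 H2; rewrite geq_max => /andP [Hj _].
rewrite leq_min => /andP [Hn _].
by move: Hn; rewrite addnS ltnNge leq_addl.
Qed.

Definition local_period (T : eqType) (w : seq T) (i : nat) : nat :=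
  ex_minn (lp_ok_exists w i).

From mathcomp Require Import all_boot.
From mathcomp Require Import zify.

Set Implicit Arguments.
Unset Strict Implicit.
Unset Printing Implicit Defensive.

(* Write m = mu(i) and p = mu(j) and suppose m <= 2p < 4m with p <> m.  The
   square of period m centred at i and the one of period p centred at j overlap
   enough for two periods q > r on a common stretch to yield the period q - r on
   a slightly shorter stretch (and, when m = 2p, the period p spreads from j back
   over i).  According to the sign of p - m and the size of j - i, this gives a
   local period at i smaller than m (namely m - p, p or 2m - p) or a local period
   at j smaller than p (namely 2p - m or p - m), against minimality. *)

Section Periods.
Variables (T : eqType) (w : seq T).

Definition periodic_on (q a b : nat) : Prop :=
  forall k, a <= k -> k + q <= b -> letter w k = letter w (k + q).

Lemma periodic_on_sub q a b a' b' :
  periodic_on q a b -> a <= a' -> b' <= b -> periodic_on q a' b'.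
Proof. by move=> per le_aa' le_b'b k k_ge k_le; apply: per; lia. Qed.

Lemma periodic_on_cat q a b c d :
  periodic_on q a b -> periodic_on q c d -> c + q <= b.+1 ->
  periodic_on q a d.
Proof.
move=> per_ab per_cd overlap k k_ge k_le.
by case: (leqP c k) => [k_ge_c | k_lt_c]; [apply: per_cd | apply: per_ab]; lia.
Qed.

Lemma periodic_on_diffl q r a b :
  r < q -> periodic_on q a b -> periodic_on r (a + (q - r)) b ->
  periodic_on (q - r) a (b - r).
Proof.
move=> lt_rq per_q per_r k k_ge k_le.
have shift : k + (q - r) + r = k + q by lia.
rewrite (per_q k) ?(per_r (k + (q - r))) ?shift //; lia.
Qed.

Lemma periodic_on_diffr q r a b :
  r < q -> periodic_on q a b -> periodic_on r a (b - (q - r)) ->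
  periodic_on (q - r) (a + r) b.
Proof.
move=> lt_rq per_q per_r k k_ge k_le.
have [k' k_eq] : exists k', k = k' + r by exists (k - r); lia.
subst k.
have shift : k' + r + (q - r) = k' + q by lia.
rewrite -(per_r k') ?(per_q k') ?shift //; lia.
Qed.

Definition local_periodic (c q : nat) : Prop :=
  periodic_on q (maxn 1 (c - q)) (minn (size w) (c + q - 1)).

Lemma lp_okP c q : reflect (0 < q /\ local_periodic c q) (lp_ok w c q).
Proof.
apply: (iffP andP) => [[q_gt0 /allP per] | [q_gt0 per]]; split=> //.
- move=> k k_ge k_le; apply/eqP/per.
  by rewrite mem_filter mem_iota; apply/andP; split; lia.
- apply/allP=> k; rewrite mem_filter => /andP[/andP[k_ge k_le] _].
  by apply/eqP/per.
Qed.

Lemma local_period_spec c :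
  0 < local_period w c /\ local_periodic c (local_period w c).
Proof. by apply/lp_okP; rewrite /local_period; case: ex_minnP. Qed.

Lemma local_period_min c q :
  0 < q -> local_periodic c q -> local_period w c <= q.
Proof.
move=> q_gt0 per; rewrite /local_period; case: ex_minnP => mu _; apply.
exact/lp_okP.
Qed.

End Periods.

Section TwoLocalPeriods.
Variables (T : eqType) (w : seq T) (i j m p : nat).
Hypotheses (m_lt_i : m < i) (im_le_n : i + m - 1 <= size w).
Hypotheses (i_lt_j : i < j) (j_lt_im : j < i + m) (j_lt_ip : j < i + p).
Hypotheses (per_m : local_periodic w i m) (per_p : local_periodic w j p).

Lemma local_periodic_diff_at_i :
  p < m -> m - p <= j - i -> local_periodic w i (m - p).
Proof.
move=> lt_pm le_mp_ji.
apply: (periodic_on_sub (periodic_on_diffl (a := i - (m - p)) (b := i + m - 1)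
                                            lt_pm _ _)); try lia.
- by apply: (periodic_on_sub per_m); lia.
- by apply: (periodic_on_sub per_p); lia.
Qed.

Lemma local_periodic_half_at_i :
  m = 2 * p -> j - i < p -> local_periodic w i p.
Proof.
move=> m_eq ji_lt_p.
have lt_pm : p < m by lia.
have per_left : periodic_on w p (i - p) (j - 1).
  have -> : p = m - p by lia.
  apply: (periodic_on_sub (periodic_on_diffl (a := i - (m - p))
                                             (b := j + p - 1) lt_pm _ _)); try lia.
  - by apply: (periodic_on_sub per_m); lia.
  - by apply: (periodic_on_sub per_p); lia.
have per_right : periodic_on w p (j - p) (i + p - 1).
  by apply: (periodic_on_sub per_p); lia.
by apply: (periodic_on_sub (periodic_on_cat per_left per_right _)); lia.
Qed.

Lemma local_periodic_double_diff_at_j :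
  p < m < 2 * p -> j - i < m - p -> local_periodic w j (2 * p - m).
Proof.
move=> /andP[lt_pm lt_m_2p] ji_lt_mp.
have lt_mp_p : m - p < p by lia.
have per_mp : periodic_on w (m - p) (j - p) (j - 1).
  apply: (periodic_on_sub (periodic_on_diffl (a := j - p) (b := j + p - 1)
                                             lt_pm _ _)); try lia.
  - by apply: (periodic_on_sub per_m); lia.
  - by apply: (periodic_on_sub per_p); lia.
have -> : 2 * p - m = p - (m - p) by lia.
apply: (periodic_on_sub (periodic_on_diffr (a := j - p)
                                           (b := j + (p - (m - p)) - 1)
                                           lt_mp_p _ _)); try lia.
- by apply: (periodic_on_sub per_p); lia.
- by apply: (periodic_on_sub per_mp); lia.
Qed.

Lemma local_periodic_double_diff_at_i :
  m < p < 2 * m -> j - i <= p - m -> local_periodic w i (2 * m - p).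
Proof.
move=> /andP[lt_mp lt_p_2m] ji_le_pm.
have lt_pm_m : p - m < m by lia.
have per_pm : periodic_on w (p - m) i (i + m - 1).
  apply: (periodic_on_sub (periodic_on_diffr (a := i - m) (b := i + m - 1)
                                             lt_mp _ _)); try lia.
  - by apply: (periodic_on_sub per_p); lia.
  - by apply: (periodic_on_sub per_m); lia.
have -> : 2 * m - p = m - (p - m) by lia.
apply: (periodic_on_sub (periodic_on_diffl (a := i - (m - (p - m)))
                                           (b := i + m - 1) lt_pm_m _ _)); try lia.
- by apply: (periodic_on_sub per_m); lia.
- by apply: (periodic_on_sub per_pm); lia.
Qed.

Lemma local_periodic_diff_at_j :
  m < p -> p - m < j - i -> local_periodic w j (p - m).
Proof.
move=> lt_mp pm_lt_ji.
apply: (periodic_on_sub (periodic_on_diffr (a := j - p)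
                           (b := minn (size w) (j + (p - m) - 1)) lt_mp _ _));
  try lia.
- by apply: (periodic_on_sub per_p); lia.
- by apply: (periodic_on_sub per_m); lia.
Qed.

Hypotheses (p_gt0 : 0 < p) (p_neq_m : p <> m).
Hypotheses (m_min : forall q, 0 < q -> local_periodic w i q -> m <= q).
Hypotheses (p_min : forall q, 0 < q -> local_periodic w j q -> p <= q).

Lemma minimal_local_periods_far : 2 * p < m \/ 2 * m <= p.
Proof.
case: (ltnP (2 * p) m) => [|le_m_2p]; first by left.
case: (leqP (2 * m) p) => [|lt_p_2m]; first by right.
exfalso; case: (ltngtP p m) => [lt_pm | lt_mp | //].
- case: (leqP (m - p) (j - i)) => ji.
  + by have := m_min _ (local_periodic_diff_at_i lt_pm ji); lia.
  case: (eqVneq m (2 * p)) => [m_eq | m_neq].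
  + by have := m_min p_gt0 (local_periodic_half_at_i m_eq _); lia.
  + by have := p_min _ (local_periodic_double_diff_at_j _ ji); lia.
- case: (leqP (j - i) (p - m)) => ji.
  + by have := m_min _ (local_periodic_double_diff_at_i _ ji); lia.
  + by have := p_min _ (local_periodic_diff_at_j lt_mp ji); lia.
Qed.

End TwoLocalPeriods.

Theorem lemma7 (T : eqType) (w : seq T) (i : nat) :
  1 <= i <= size w ->
  local_period w i + 1 <= i ->
  i + local_period w i - 1 <= size w ->
  1 < local_period w i ->
  forall j : nat,
    i < j < i + local_period w i ->
    j < i + local_period w j ->
    local_period w j <> local_period w i ->
    2 * local_period w j < local_period w i \/
    2 * local_period w i <= local_period w j.
Proof.
move=> _ m_lt_i im_le_n _ j /andP[i_lt_j j_lt_im] j_lt_ip p_neq_m.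
have [p_gt0 per_p] := local_period_spec w j.
have [_ per_m] := local_period_spec w i.
apply: (minimal_local_periods_far (w := w) (i := i) (j := j)) => //.
- by rewrite -addn1.
- exact: local_period_min.
- exact: local_period_min.
Qed.
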